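(* Let $I=[a,b)\subseteq[0,1)$ with $a<b$, let $r$ be uniformly distributed on $[a,b)$, and let $\tilde x^n$ be obtained from $r$ by the rule: $\hat x^n=\min\{y^n:F_I(y^n)>r\}$ (in Gray order); $\tilde x^n=\hat x^n+1$ if $r\ge\bar F_I(\hat x^n)$ and $\hat x^n$ is not the largest element in Gray order; otherwise $\tilde x^n=\hat x^n$. Then $$\mathbb{E}\big[\lambda_h(\tilde x^n)\big]>nH(X)-1-2\log_2\rho,$$ where $H(X)=-p(0)\log_2p(0)-p(1)\log_2p(1)$.
   Context: Let $p$ be a probability distribution on $\{0,1\}$ with $p(0),p(1)\in(0,1)$, $p(0)\ne p(1)$, $\rho=\max\{p(0)/p(1),p(1)/p(0)\}$, and $p(x^n)=\prod_i p(x_i)$. Gray code is $g(x^n)=x^n\oplus(0,x_1,\dots,x_{n-1})$; Gray order $\preceq_G$ on $\{0,1\}^n$ is $x^n\preceq_G y^n$ iff $g^{-1}(x^n)\preceq_L g^{-1}(y^n)$ (lexicographic). $x^n+1$ and $x^n-1$ denote the immediate successor and predecessor in Gray order. $F(x^n)=\sum_{a^n\preceq_G x^n}p(a^n)$, with $F(x^n-1):=0$ if $x^n$ is the smallest element. For $I=[a,b)$: $F_I(x^n)=a+(b-a)F(x^n)$; $\alpha_h:=\rho$; $\lambda_h(x^n)=\lfloor-\log_2(\alpha_h(b-a)p(x^n))\rfloor$; $\bar F_I(x^n)=\lfloor F_I(x^n-1)+2^{-\lambda_h(x^n)}\rfloor_{\lambda_h(x^n)}$, where $\lfloor r\rfloor_l=2^{-l}\lfloor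 2^lr\rfloor$ for real $r\ge0$ and integer $l$. *)

From Stdlib Require Import Reals Lra Lia ZArith Arith List.
Open Scope R_scope.

(* Binary strings x^n are lists of booleans (false = 0, true = 1), x_1 first. *)

(* Binary representation of k with n bits, most significant bit first.
   As k ranges over 0 .. 2^n-1, [bin n k] enumerates {0,1}^n in
   lexicographic order. *)
Fixpoint bin (n k : nat) : list bool :=
  match n with
  | O => nil
  | S m => Nat.testbit k m :: bin m k
  end.

Fixpoint gray_aux (prev : bool) (x : list bool) : list bool :=
  match x with
  | nil => nil
  | h :: t => xorb h prev :: gray_aux h t
  end.
Definition gray (x : list bool) : list bool := gray_aux false x.

(* The element of rank k in Gray order: x ≼_G y iff g^{-1}(x) ≼_L g^{-1}(y),
   so the k-th element (k = 0 .. 2^n-1) in Gray order is g(bin n k). *)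
Definition gelem (n k : nat) : list bool := gray (bin n k).

Definition prob (p : bool -> R) (x : list bool) : R :=
  fold_right (fun c acc => p c * acc) 1 x.

Definition log2 (x : R) : R := ln x / ln 2.

Definition rho (p : bool -> R) : R := Rmax (p false / p true) (p true / p false).

Definition Fr (p : bool -> R) (n k : nat) : R :=
  sum_f_R0 (fun j => prob p (gelem n j)) k.

Definition Fprev (p : bool -> R) (n k : nat) : R :=
  match k with O => 0 | S k' => Fr p n k' end.

Definition FI (p : bool -> R) (a b : R) (n k : nat) : R := a + (b - a) * Fr p n k.
Definition FIprev (p : bool -> R) (a b : R) (n k : nat) : R :=
  a + (b - a) * Fprev p n k.

(* floor (Int_part is the floor function) *)
Definition floorZ (x : R) : Z := Int_part x.

(* lambda_h(x^n) = floor(-log2(alpha_h (b-a) p(x^n))), alpha_h = rho *)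
Definition lambda_h (p : bool -> R) (a b : R) (n k : nat) : Z :=
  floorZ (- log2 (rho p * (b - a) * prob p (gelem n k))).

Definition floor_l (r : R) (l : Z) : R :=
  powerRZ 2 (- l) * IZR (floorZ (powerRZ 2 l * r)).

Definition Fbar (p : bool -> R) (a b : R) (n k : nat) : R :=
  floor_l (FIprev p a b n k + powerRZ 2 (- lambda_h p a b n k)) (lambda_h p a b n k).

(* smallest k' >= k (at most k + fuel) satisfying f, defaulting to k + fuel *)
Fixpoint first_from (f : nat -> bool) (k fuel : nat) : nat :=
  match fuel with
  | O => k
  | S fu => if f k then k else first_from f (S k) fu
  end.

(* rank of hat x^n = min { y^n : F_I(y^n) > r } in Gray order
   (well defined for r < b; default: the largest element) *)
Definition xhat (p : bool -> R) (a b : R) (n : nat) (r : R) : nat :=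
  first_from (fun k => if Rlt_dec r (FI p a b n k) then true else false)
             0 (2 ^ n - 1).

Definition xtilde (p : bool -> R) (a b : R) (n : nat) (r : R) : nat :=
  let k := xhat p a b n r in
  if Rle_dec (Fbar p a b n k) r then
    (if Nat.ltb k (2 ^ n - 1) then S k else k)
  else k.

Definition Hent (p : bool -> R) : R :=
  - p false * log2 (p false) - p true * log2 (p true).

From Stdlib Require Import Reals Lra Lia ZArith Arith List.
From Coquelicot Require Import Coquelicot.
Open Scope R_scope.

(* The points F_I(x^n - 1), taken in Gray order, cut [a,b) into cells of
   length (b - a) p(x^n); on the cell of x^n the decoder outputs x^n or its
   Gray successor.  As b - a <= 1, flooring gives
   lambda_h(x^n) > -log2 p(x^n) - log2 rho - 1, and as consecutive Gray
   codewords differ in one bit their probabilities differ by a factor at most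
   rho, so lambda_h(tilde x^n) > -log2 p(x^n) - 2 log2 rho - 1 on the whole
   cell.  Integrating over the cells, the expectation exceeds
   sum p(x^n) (-log2 p(x^n)) - 2 log2 rho - 1 = n H(X) - 2 log2 rho - 1. *)

Lemma bin_ext n x y :
  (forall m, (m < n)%nat -> Nat.testbit x m = Nat.testbit y m) -> bin n x = bin n y.
Proof.
  induction n as [|n IH]; intros H; simpl; auto.
  rewrite H by lia. f_equal. apply IH. intros; apply H; lia.
Qed.

Lemma bin_S_lt n k : (k < 2 ^ n)%nat -> bin (S n) k = false :: bin n k.
Proof.
  intros H. simpl. f_equal.
  apply (Nat.testbit_unique k n false k 0); auto; simpl; lia.
Qed.

Lemma bin_S_add n k : (k < 2 ^ n)%nat -> bin (S n) (2 ^ n + k) = true :: bin n k.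
Proof.
  intros H. simpl. f_equal.
  - apply (Nat.testbit_unique _ n true k 0); auto; simpl; lia.
  - apply bin_ext. intros m Hm.
    rewrite <- (Nat.mod_pow2_bits_low (2 ^ n + k) n m Hm).
    replace (2 ^ n + k)%nat with (k + 1 * 2 ^ n)%nat by lia.
    rewrite Nat.Div0.mod_add, Nat.mod_small; auto.
Qed.

Lemma bin_0 n : bin n 0 = repeat false n.
Proof. induction n as [|n IH]; simpl; auto. rewrite IH, Nat.bits_0. reflexivity. Qed.

Lemma bin_pred_pow2 n : bin n (2 ^ n - 1) = repeat true n.
Proof.
  induction n as [|n IH]; simpl; auto.
  pose proof (Nat.pow_lower_bound 2 n ltac:(discriminate)).
  replace (2 ^ n + (2 ^ n + 0) - 1)%nat with (2 ^ n + (2 ^ n - 1))%nat by lia.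
  change (bin (S n) (2 ^ n + (2 ^ n - 1)) = true :: repeat true n).
  rewrite bin_S_add, IH by lia. reflexivity.
Qed.

Lemma gray_aux_repeat c n : gray_aux c (repeat c n) = repeat false n.
Proof. induction n as [|n IH]; simpl; auto. rewrite IH. destruct c; reflexivity. Qed.

Lemma gray_aux_repeat_true n :
  gray_aux false (repeat true n) = gray_aux true (repeat false n).
Proof. destruct n; simpl; auto. rewrite !gray_aux_repeat. reflexivity. Qed.

Definition flip_one (x y : list bool) : Prop :=
  exists l1 c l2, x = l1 ++ c :: l2 /\ y = l1 ++ negb c :: l2.

Lemma flip_one_cons h x y : flip_one x y -> flip_one (h :: x) (h :: y).
Proof. intros (l1 & c & l2 & -> & ->). exists (h :: l1), c, l2. auto. Qed.

Lemma gray_aux_bin_succ n c k :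
  (S k < 2 ^ n)%nat -> flip_one (gray_aux c (bin n k)) (gray_aux c (bin n (S k))).
Proof.
  revert c k. induction n as [|n IH]; intros c k Hk; [simpl in Hk; lia|].
  assert (H2 : (2 ^ S n = 2 ^ n + 2 ^ n)%nat) by (simpl; lia).
  destruct (lt_dec (S k) (2 ^ n)) as [Hlow|Hhigh].
  - rewrite !bin_S_lt by lia. apply flip_one_cons, IH, Hlow.
  - destruct (Nat.eq_dec (S k) (2 ^ n)) as [Hmid|Hmid].
    + (* k = 0111..1 and S k = 1000..0: only the leading Gray bit changes *)
      rewrite Hmid. replace k with (2 ^ n - 1)%nat by lia.
      replace (2 ^ n)%nat with (2 ^ n + 0)%nat at 2 by lia.
      rewrite bin_S_lt, bin_S_add, bin_0, bin_pred_pow2 by lia.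
      exists nil, c, (gray_aux true (repeat false n)).
      simpl. rewrite gray_aux_repeat_true. destruct c; auto.
    + replace k with (2 ^ n + (k - 2 ^ n))%nat by lia.
      replace (S (2 ^ n + (k - 2 ^ n))) with (2 ^ n + S (k - 2 ^ n))%nat by lia.
      rewrite !bin_S_add by lia. apply flip_one_cons, IH. lia.
Qed.

Fixpoint sum_lt (f : nat -> R) (N : nat) : R :=
  match N with O => 0 | S m => sum_lt f m + f m end.

Lemma sum_f_R0_sum_lt f k : sum_f_R0 f k = sum_lt f (S k).
Proof. induction k as [|k IH]; simpl in *; [lra|]. rewrite IH. reflexivity. Qed.

Lemma sum_lt_add f M N :
  sum_lt f (M + N) = sum_lt f M + sum_lt (fun i => f (M + i)%nat) N.
Proof.
  induction N as [|N IH]; simpl; [rewrite Nat.add_0_r; lra|].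
  rewrite Nat.add_succ_r. simpl. rewrite IH. lra.
Qed.

Lemma sum_lt_ext f g N :
  (forall i, (i < N)%nat -> f i = g i) -> sum_lt f N = sum_lt g N.
Proof.
  induction N as [|N IH]; simpl; intros H; auto.
  rewrite IH by (intros; apply H; lia). rewrite H by lia. reflexivity.
Qed.

Lemma sum_lt_scal c f N : sum_lt (fun i => c * f i) N = c * sum_lt f N.
Proof. induction N as [|N IH]; simpl; [ring|]. rewrite IH; ring. Qed.

Lemma sum_lt_plus f g N : sum_lt (fun i => f i + g i) N = sum_lt f N + sum_lt g N.
Proof. induction N as [|N IH]; simpl; [ring|]. rewrite IH; ring. Qed.

Lemma sum_lt_lt f g N :
  (0 < N)%nat -> (forall i, (i < N)%nat -> f i < g i) -> sum_lt f N < sum_lt g N.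
Proof.
  induction N as [|N IH]; intros HN H; simpl; [lia|].
  pose proof (H N ltac:(lia)).
  destruct N as [|N]; simpl; [lra|].
  assert (sum_lt f (S N) < sum_lt g (S N)) by (apply IH; intros; [lia|apply H; lia]).
  simpl in *. lra.
Qed.

Lemma sum_lt_bin_S (F : list bool -> R) n :
  sum_lt (fun k => F (bin (S n) k)) (2 ^ S n) =
  sum_lt (fun k => F (false :: bin n k)) (2 ^ n) +
  sum_lt (fun k => F (true :: bin n k)) (2 ^ n).
Proof.
  replace (2 ^ S n)%nat with (2 ^ n + 2 ^ n)%nat by (simpl; lia).
  rewrite sum_lt_add. f_equal; apply sum_lt_ext; intros.
  - rewrite bin_S_lt; auto.
  - rewrite bin_S_add; auto.
Qed.

Lemma ln2_pos : 0 < ln 2.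
Proof. rewrite <- ln_1. apply ln_increasing; lra. Qed.

Lemma log2_1 : log2 1 = 0.
Proof. unfold log2. rewrite ln_1. field. pose proof ln2_pos; lra. Qed.

Lemma log2_mult x y : 0 < x -> 0 < y -> log2 (x * y) = log2 x + log2 y.
Proof. intros. unfold log2. rewrite ln_mult by auto. field. pose proof ln2_pos; lra. Qed.

Lemma log2_le x y : 0 < x -> x <= y -> log2 x <= log2 y.
Proof.
  intros. unfold log2. apply Rmult_le_compat_r.
  - left. apply Rinv_0_lt_compat, ln2_pos.
  - apply ln_le; auto.
Qed.

Section Source.
Variable p : bool -> R.
Hypothesis hp0 : 0 < p false < 1.
Hypothesis hp1 : 0 < p true < 1.
Hypothesis hsum : p false + p true = 1.

Lemma p_pos c : 0 < p c.
Proof. destruct c; lra. Qed.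

Lemma prob_pos x : 0 < prob p x.
Proof. induction x as [|c x IH]; simpl; [lra|]. pose proof (p_pos c). nra. Qed.

Lemma prob_app x y : prob p (x ++ y) = prob p x * prob p y.
Proof. induction x as [|c x IH]; simpl; [ring|]. rewrite IH. ring. Qed.

Lemma p_negb_le c : p (negb c) <= rho p * p c.
Proof.
  pose proof (p_pos c). unfold rho.
  destruct c; simpl.
  - apply Rle_trans with (p false / p true * p true); [right; field; lra|].
    apply Rmult_le_compat_r; [lra|apply Rmax_l].
  - apply Rle_trans with (p true / p false * p false); [right; field; lra|].
    apply Rmult_le_compat_r; [lra|apply Rmax_r].
Qed.

Lemma rho_ge1 : 1 <= rho p.
Proof. pose proof (p_negb_le false). pose proof (p_negb_le true). simpl in *. nra. Qed.

Lemma prob_flip_one_le x y : flip_one x y -> prob p y <= rho p * prob p x.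
Proof.
  intros (l1 & c & l2 & -> & ->). rewrite !prob_app. simpl.
  pose proof (p_negb_le c). pose proof (prob_pos l1). pose proof (prob_pos l2).
  apply Rle_trans with (prob p l1 * (rho p * p c * prob p l2)); [|right; ring].
  apply Rmult_le_compat_l; [lra|]. apply Rmult_le_compat_r; lra.
Qed.

Lemma sum_prob_gray_aux n c :
  sum_lt (fun k => prob p (gray_aux c (bin n k))) (2 ^ n) = 1.
Proof.
  revert c. induction n as [|n IH]; intros c; [simpl; lra|].
  rewrite (sum_lt_bin_S (fun x => prob p (gray_aux c x))). simpl.
  rewrite !sum_lt_scal, !IH. destruct c; simpl; lra.
Qed.

Lemma sum_entropy_gray_aux n c :
  sum_lt (fun k => prob p (gray_aux c (bin n k)) *
                   - log2 (prob p (gray_aux c (bin n k)))) (2 ^ n) = INR n * Hent p.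
Proof.
  revert c. induction n as [|n IH]; intros c; [simpl; rewrite log2_1; lra|].
  rewrite S_INR, (sum_lt_bin_S (fun x => prob p (gray_aux c x) * - log2 (prob p (gray_aux c x)))).
  simpl.
  assert (Hhead : forall d c', sum_lt (fun k => p d * prob p (gray_aux c' (bin n k)) *
            - log2 (p d * prob p (gray_aux c' (bin n k)))) (2 ^ n)
          = p d * - log2 (p d) + p d * (INR n * Hent p)).
  { intros d c'.
    rewrite (sum_lt_ext _ (fun k => p d * - log2 (p d) * prob p (gray_aux c' (bin n k)) +
        p d * (prob p (gray_aux c' (bin n k)) * - log2 (prob p (gray_aux c' (bin n k)))))).
    - rewrite sum_lt_plus, !sum_lt_scal, sum_prob_gray_aux, IH. ring.
    - intros k _. rewrite log2_mult by (apply p_pos || apply prob_pos). ring. }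
  rewrite !Hhead. unfold Hent.
  destruct c; simpl; replace (p true) with (1 - p false) by lra; ring.
Qed.

End Source.

Lemma is_RInt_const_R (c u v : R) : is_RInt (fun _ => c) u v ((v - u) * c).
Proof. exact (@is_RInt_const R_NormedModule u v c). Qed.

Lemma is_RInt_two_steps (g : R -> R) u t v c1 c2 :
  u <= t <= v ->
  (forall r, u < r < t -> g r = c1) -> (forall r, t < r < v -> g r = c2) ->
  is_RInt g u v ((t - u) * c1 + (v - t) * c2).
Proof.
  intros Ht H1 H2.
  apply (@is_RInt_Chasles R_NormedModule g u t v).
  - apply (is_RInt_ext (fun _ => c1)); [|apply is_RInt_const_R].
    intros r. rewrite Rmin_left, Rmax_right by lra. intros Hr. symmetry. auto.
  - apply (is_RInt_ext (fun _ => c2)); [|apply is_RInt_const_R].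
    intros r. rewrite Rmin_left, Rmax_right by lra. intros Hr. symmetry. auto.
Qed.

Lemma is_RInt_cells (g : R -> R) (u V : nat -> R) N :
  (forall k, (k < N)%nat -> is_RInt g (u k) (u (S k)) (V k)) ->
  is_RInt g (u O) (u N) (sum_lt V N).
Proof.
  induction N as [|N IH]; intros H; simpl.
  - exact (@is_RInt_point R_NormedModule g (u O)).
  - apply (@is_RInt_Chasles R_NormedModule g _ (u N)); [apply IH; intros; apply H; lia|].
    apply H; lia.
Qed.

Lemma first_from_spec (g : nat -> bool) fuel s k :
  (s <= k <= s + fuel)%nat -> g k = true ->
  (forall j, (s <= j < k)%nat -> g j = false) -> first_from g s fuel = k.
Proof.
  revert s. induction fuel as [|fuel IH]; intros s Hk Hgk Hbefore; simpl; [lia|].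
  destruct (g s) eqn:Hgs.
  - destruct (Nat.eq_dec s k); auto. rewrite Hbefore in Hgs; [discriminate|lia].
  - assert (s <> k) by (intros ->; congruence).
    apply IH; auto; [lia|]. intros; apply Hbefore; lia.
Qed.

Section Decoder.
Variable p : bool -> R.
Hypothesis hp0 : 0 < p false < 1.
Hypothesis hp1 : 0 < p true < 1.
Hypothesis hsum : p false + p true = 1.
Variables a b : R.
Hypothesis ha : 0 <= a.
Hypothesis hab : a < b.
Hypothesis hb : b <= 1.
Variable n : nat.

Let N := (2 ^ n)%nat.
Let q k := prob p (gelem n k).
Let u k := a + (b - a) * sum_lt q k.
Let lam k := IZR (lambda_h p a b n k).
Let f r := lam (xtilde p a b n r).
Let next k := if Nat.ltb k (N - 1) then S k else k.

Definition cell_bound k := - log2 (q k) - 2 * log2 (rho p) - 1.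

Lemma q_pos k : 0 < q k.
Proof. apply prob_pos; auto. Qed.

Lemma u_succ k : u (S k) = u k + (b - a) * q k.
Proof. unfold u; simpl. ring. Qed.

Lemma u_lt_succ k : u k < u (S k).
Proof. rewrite u_succ. pose proof (q_pos k). nra. Qed.

Lemma u_le i j : (i <= j)%nat -> u i <= u j.
Proof. induction 1; [lra|]. pose proof (u_lt_succ m). lra. Qed.

Lemma u_0 : u O = a.
Proof. unfold u; simpl. ring. Qed.

Lemma u_N : u N = b.
Proof. unfold u, q, N, gelem, gray. rewrite sum_prob_gray_aux; auto. ring. Qed.

Lemma FI_u k : FI p a b n k = u (S k).
Proof. unfold FI, Fr. rewrite sum_f_R0_sum_lt. reflexivity. Qed.

Lemma xhat_cell k r : (k < N)%nat -> u k <= r < u (S k) -> xhat p a b n r = k.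
Proof.
  intros Hk Hr. unfold xhat. apply first_from_spec.
  - unfold N in Hk. lia.
  - rewrite FI_u. destruct (Rlt_dec r (u (S k))); auto; lra.
  - intros j Hj. rewrite FI_u. destruct (Rlt_dec r (u (S j))); auto.
    pose proof (u_le (S j) k ltac:(lia)). lra.
Qed.

Lemma xtilde_cell k r : (k < N)%nat -> u k <= r < u (S k) ->
  xtilde p a b n r = if Rle_dec (Fbar p a b n k) r then next k else k.
Proof. intros Hk Hr. unfold xtilde. rewrite (xhat_cell k r Hk Hr). reflexivity. Qed.

Lemma lambda_h_gt k : lam k > - log2 (q k) - log2 (rho p) - 1.
Proof.
  unfold lam, lambda_h, floorZ. fold (q k).
  pose proof (base_Int_part (- log2 (rho p * (b - a) * q k))).
  pose proof (rho_ge1 p hp0 hp1). pose proof (q_pos k).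
  assert (log2 (b - a) <= 0) by (rewrite <- log2_1; apply log2_le; lra).
  rewrite !log2_mult in H |- * by (auto; nra). lra.
Qed.

Lemma lambda_h_gt_cell_bound k : lam k > cell_bound k.
Proof.
  pose proof (lambda_h_gt k).
  assert (0 <= log2 (rho p)) by (rewrite <- log2_1; apply log2_le; [lra|apply rho_ge1; auto]).
  unfold cell_bound. lra.
Qed.

Lemma lambda_h_next_gt_cell_bound k : (k < N)%nat -> lam (next k) > cell_bound k.
Proof.
  intros Hk. unfold next. destruct (Nat.ltb_spec k (N - 1)) as [Hlt|]; [|apply lambda_h_gt_cell_bound].
  assert (Hflip : q (S k) <= rho p * q k).
  { apply prob_flip_one_le; auto. apply gray_aux_bin_succ. unfold N in Hlt. lia. }
  pose proof (lambda_h_gt (S k)). pose proof (rho_ge1 p hp0 hp1).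
  pose proof (q_pos k). pose proof (q_pos (S k)).
  assert (log2 (q (S k)) <= log2 (rho p) + log2 (q k))
    by (rewrite <- log2_mult by lra; apply log2_le; auto).
  unfold cell_bound. lra.
Qed.

Lemma cell_integral_gt k : (k < N)%nat ->
  exists V, is_RInt f (u k) (u (S k)) V /\ V > cell_bound k * ((b - a) * q k).
Proof.
  intros Hk.
  set (t := Rmax (u k) (Rmin (Fbar p a b n k) (u (S k)))).
  pose proof (u_lt_succ k) as Hu.
  assert (Ht : u k <= t <= u (S k)).
  { split; [apply Rmax_l|]. apply Rmax_lub; [lra|apply Rmin_r]. }
  exists ((t - u k) * lam k + (u (S k) - t) * lam (next k)). split.
  - apply is_RInt_two_steps; auto; intros r Hr; unfold f; rewrite (xtilde_cell k r) by (auto; lra);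
      destruct (Rle_dec (Fbar p a b n k) r); auto; exfalso;
      revert Hr; unfold t, Rmax, Rmin;
      repeat destruct Rle_dec; lra.
  - pose proof (lambda_h_gt_cell_bound k). pose proof (lambda_h_next_gt_cell_bound k Hk).
    rewrite u_succ in Hu, Ht |- *.
    destruct (Rle_dec (lam k) (lam (next k))); nra.
Qed.

Lemma expectation_gt :
  exists V, is_RInt f a b V /\ V / (b - a) > INR n * Hent p - 1 - 2 * log2 (rho p).
Proof.
  set (V k := RInt f (u k) (u (S k))).
  assert (HV : forall k, (k < N)%nat ->
            is_RInt f (u k) (u (S k)) (V k) /\ V k > cell_bound k * ((b - a) * q k)).
  { intros k Hk. destruct (cell_integral_gt k Hk) as (W & HW & HWgt).
    unfold V. rewrite (is_RInt_unique _ _ _ _ HW). auto. }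
  exists (sum_lt V N). split.
  - rewrite <- u_0, <- u_N. apply is_RInt_cells. apply HV.
  - apply Rmult_gt_reg_r with (b - a); [lra|].
    unfold Rdiv. rewrite Rmult_assoc, Rinv_l, Rmult_1_r by lra.
    apply Rle_lt_trans with (sum_lt (fun k => cell_bound k * ((b - a) * q k)) N).
    + right.
      rewrite (sum_lt_ext _ (fun k => (b - a) * (q k * - log2 (q k)) +
                 - ((b - a) * (2 * log2 (rho p) + 1)) * q k))
        by (intros; unfold cell_bound; ring).
      rewrite sum_lt_plus, !sum_lt_scal.
      unfold q, N, gelem, gray. rewrite sum_entropy_gray_aux, sum_prob_gray_aux by auto. ring.
    + apply sum_lt_lt; [apply Nat.pow_lower_bound; discriminate|]. apply HV.
Qed.

End Decoder.

Theorem theorem2 (p : bool -> R)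
  (hp0 : 0 < p false < 1) (hp1 : 0 < p true < 1)
  (hsum : p false + p true = 1) (hneq : p false <> p true)
  (a b : R) (ha : 0 <= a) (hab : a < b) (hb : b <= 1) (n : nat) :
  exists pr : Riemann_integrable
                (fun r => IZR (lambda_h p a b n (xtilde p a b n r))) a b,
    RiemannInt pr / (b - a) > INR n * Hent p - 1 - 2 * log2 (rho p).
Proof.
  destruct (expectation_gt p hp0 hp1 hsum a b ha hab hb n) as (V & HV & Hgt).
  exists (ex_RInt_Reals_0 _ _ _ (ex_intro _ V HV)).
  rewrite <- RInt_Reals, (is_RInt_unique _ _ _ _ HV). exact Hgt.
Qed.
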